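(* The categories $\sigma\ell\mathbb{G}_u$ and $\mathcal{V}_{\sigma\ell\mathbb{G}_u}$ are isomorphic via the functor $U_u\colon\mathcal{V}_{\sigma\ell\mathbb{G}_u}\to\sigma\ell\mathbb{G}_u$ that forgets $\bigvee^-$ (keeping the $\ell$-group operations and interpreting the constant $1$ as the designated weak unit; identity on maps) and the functor $F_u\colon\sigma\ell\mathbb{G}_u\to\mathcal{V}_{\sigma\ell\mathbb{G}_u}$ that adds the operation $\bigvee^-(g,f_1,f_2,\dots):=\sup_{n\ge1}\{f_n\wedge g\}$ and interprets $1$ as the designated weak unit (identity on maps); both are well defined and mutually inverse. In particular the category of Dedekind $\sigma$-complete $\ell$-groups with weak unit is an infinitary variety. An element $1$ of an $\ell$-group $G$ is a weak (order) unit if $1\ge0$ and for all $f\in G$, $f\wedge1=0$ implies $f=0$. Dedekind $\sigma$-complete: every countable subset with an upper bound has a supremum. $\sigma$-continuous: preserves all existing countable suprema. $\sigma\ell\mathbb{G}_u$ is the category of Dedekind $\sigma$-complete $\ell$-groups with a designated weak unit, with $\sigma$-continuous $\ell$-morphisms preserving the designated weak unit. $\mathcal{V}_{\sigma\ell\mathbb{G}}$ is the variety of algebras $(G,0,+,-,\vee,\wedge,\bigvee^-)$, $\bigvee^-$ of countably infinite arity with $\bigvee_{n\ge1}^g f_n:=\bigvee^-(g,f_1,f_2,\dots)$, satisfying the $\ell$-group axioms and (A1) $\bigvee_{n\ge1}^g f_n=\bigvee_{n\ge1}^g(f_n\wedge g)$; (A2) $\bigvee_{n\ge1}^g f_n=(f_1\wedge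 g)\vee\bigvee^-(g,f_2,f_3,\dots)$; (A3) $\bigvee_{n\ge1}^g(f_n\wedge h)\le h$ ($a\le b$ meaning $a\wedge b=a$). $\mathcal{V}_{\sigma\ell\mathbb{G}_u}$ is the variety in the language of $\mathcal{V}_{\sigma\ell\mathbb{G}}$ plus a constant $1$, axiomatized by the axioms of $\mathcal{V}_{\sigma\ell\mathbb{G}}$ together with $\bigvee_{n\ge1}^{|f|}(|f|\wedge n1)=|f|$; its morphisms preserve all operations including $1$. *)

From Stdlib Require Import ClassicalEpsilon.

Record lgu_ops (T : Type) := LguOps {
  zero : T; add : T -> T -> T; opp : T -> T;
  join : T -> T -> T; meet : T -> T -> T; one : T }.
Arguments zero {T}. Arguments add {T}. Arguments opp {T}.
Arguments join {T}. Arguments meet {T}. Arguments one {T}.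
Arguments LguOps {T}.

Section LGroup.
Context {T : Type} (s : lgu_ops T).

Definition lgroup_axioms : Prop :=
  (forall x y z, add s x (add s y z) = add s (add s x y) z) /\
  (forall x y, add s x y = add s y x) /\
  (forall x, add s x (zero s) = x) /\
  (forall x, add s x (opp s x) = zero s) /\
  (forall x y z, join s x (join s y z) = join s (join s x y) z) /\
  (forall x y, join s x y = join s y x) /\
  (forall x y z, meet s x (meet s y z) = meet s (meet s x y) z) /\
  (forall x y, meet s x y = meet s y x) /\
  (forall x y, join s x (meet s x y) = x) /\
  (forall x y, meet s x (join s x y) = x) /\
  (forall x y z, add s x (join s y z) = join s (add s x y) (add s x z)).

Definition le (a b : T) : Prop := meet s a b = a.

Definition is_sup (f : nat -> T) (x : T) : Prop :=
  (forall n, le (f n) x) /\ (forall u, (forall n, le (f n) u) -> le x u).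

Definition dedekind_sigma_complete : Prop :=
  forall f : nat -> T, (exists u, forall n, le (f n) u) -> exists x, is_sup f x.

Definition weak_unit (u : T) : Prop :=
  le (zero s) u /\ forall f, meet s f u = zero s -> f = zero s.

Definition is_sigma_lgu : Prop :=
  lgroup_axioms /\ dedekind_sigma_complete /\ weak_unit (one s).

Definition absv (f : T) : T := join s f (opp s f).

Fixpoint nsmul (n : nat) (x : T) : T :=
  match n with O => zero s | S m => add s x (nsmul m x) end.

End LGroup.

Definition is_lhom {T1 T2 : Type} (s1 : lgu_ops T1) (s2 : lgu_ops T2)
    (h : T1 -> T2) : Prop :=
  h (zero s1) = zero s2 /\
  (forall x y, h (add s1 x y) = add s2 (h x) (h y)) /\
  (forall x, h (opp s1 x) = opp s2 (h x)) /\
  (forall x y, h (join s1 x y) = join s2 (h x) (h y)) /\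
  (forall x y, h (meet s1 x y) = meet s2 (h x) (h y)).

Definition sigma_continuous {T1 T2 : Type} (s1 : lgu_ops T1) (s2 : lgu_ops T2)
    (h : T1 -> T2) : Prop :=
  forall (f : nat -> T1) x, is_sup s1 f x -> is_sup s2 (fun n => h (f n)) (h x).

Definition hom_sigma_lgu {T1 T2 : Type} (s1 : lgu_ops T1) (s2 : lgu_ops T2)
    (h : T1 -> T2) : Prop :=
  is_lhom s1 s2 h /\ sigma_continuous s1 s2 h /\ h (one s1) = one s2.

(* Algebras in the language of V_{sigma lG_u}: l-group operations, constant 1,
   and the countably infinitary operation  bigv g (f_1, f_2, ...)  where the
   sequence f_1, f_2, ... is represented by f : nat -> T with f_{n+1} = f n. *)
Record V_ops (T : Type) := VOps { base : lgu_ops T; bigv : T -> (nat -> T) -> T }.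
Arguments base {T}. Arguments bigv {T}. Arguments VOps {T}.

Definition is_V {T : Type} (o : V_ops T) : Prop :=
  let s := base o in
  lgroup_axioms s /\
  (forall g f, bigv o g f = bigv o g (fun n => meet s (f n) g)) /\
  (forall g f, bigv o g f = join s (meet s (f 0) g) (bigv o g (fun n => f (S n)))) /\
  (forall g h f, le s (bigv o g (fun n => meet s (f n) h)) h) /\
  (forall f, bigv o (absv s f) (fun n => meet s (absv s f) (nsmul s (S n) (one s)))
             = absv s f).

Definition hom_V {T1 T2 : Type} (o1 : V_ops T1) (o2 : V_ops T2) (h : T1 -> T2) : Prop :=
  is_lhom (base o1) (base o2) h /\ h (one (base o1)) = one (base o2) /\
  (forall g f, h (bigv o1 g f) = bigv o2 (h g) (fun n => h (f n))).

(* The functor U_u on objects: forget bigv (identity on maps). *)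
Definition U_ob {T : Type} (o : V_ops T) : lgu_ops T := base o.

(* The functor F_u on objects: bigv(g, f_1, f_2, ...) := sup_n (f_n /\ g)
   (identity on maps).  The supremum is picked by Hilbert's epsilon; it is
   unique whenever it exists. *)
Definition F_ob {T : Type} (s : lgu_ops T) : V_ops T :=
  VOps s (fun g f =>
    epsilon (inhabits (zero s)) (fun x => is_sup s (fun n => meet s (f n) g) x)).

From Stdlib Require Import ClassicalEpsilon FunctionalExtensionality.

(* In an algebra of V_u the axioms (A1)-(A3) say exactly that [bigv g f] is the
   supremum of the [f n /\ g]; hence every bounded countable family has a
   supremum, and the unit axiom (a = sup_n a /\ n1 for a >= 0) makes [1] a weak
   unit.  Conversely, in a Dedekind sigma-complete l-group the supremum defining
   [bigv] exists, (A1)-(A3) are properties of suprema, and the unit axiom holds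
   because sigma-completeness implies the Archimedean property, which forces
   the defect [a - sup_n (a /\ n1)] to be disjoint from the weak unit.  Since
   suprema are unique, the two structures determine each other and morphisms
   are the same maps on both sides. *)

Section LGroup.
Context {T : Type} {s : lgu_ops T} (Hs : lgroup_axioms s).

Local Notation "x ⊕ y" := (add s x y) (at level 50, left associativity).
Local Notation "⊖ x" := (opp s x) (at level 35, right associativity).
Local Notation "x ⊔ y" := (join s x y) (at level 40, left associativity).
Local Notation "x ⊓ y" := (meet s x y) (at level 40, left associativity).
Local Notation "x ≤ y" := (le s x y) (at level 70).
Local Notation "𝟎" := (zero s).
Local Notation "𝟏" := (one s).

Lemma addA x y z : x ⊕ (y ⊕ z) = x ⊕ y ⊕ z. Proof. apply Hs. Qed.
Lemma addC x y : x ⊕ y = y ⊕ x. Proof. apply Hs. Qed.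
Lemma add0r x : x ⊕ 𝟎 = x. Proof. apply Hs. Qed.
Lemma addNr x : x ⊕ ⊖ x = 𝟎. Proof. apply Hs. Qed.
Lemma joinA x y z : x ⊔ (y ⊔ z) = x ⊔ y ⊔ z. Proof. apply Hs. Qed.
Lemma joinC x y : x ⊔ y = y ⊔ x. Proof. apply Hs. Qed.
Lemma meetA x y z : x ⊓ (y ⊓ z) = x ⊓ y ⊓ z. Proof. apply Hs. Qed.
Lemma meetC x y : x ⊓ y = y ⊓ x. Proof. apply Hs. Qed.
Lemma joinKI x y : x ⊔ (x ⊓ y) = x. Proof. apply Hs. Qed.
Lemma meetKU x y : x ⊓ (x ⊔ y) = x. Proof. apply Hs. Qed.
Lemma addJ x y z : x ⊕ (y ⊔ z) = (x ⊕ y) ⊔ (x ⊕ z). Proof. apply Hs. Qed.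

Lemma meetI x : x ⊓ x = x.
Proof. rewrite <- (joinKI x x) at 2. apply meetKU. Qed.

Lemma le_joinE a b : a ≤ b <-> a ⊔ b = b.
Proof.
  unfold le; split; intro H.
  - rewrite <- H, joinC, meetC. apply joinKI.
  - rewrite <- H. apply meetKU.
Qed.

Lemma le_refl a : a ≤ a. Proof. apply meetI. Qed.

Lemma le_trans a b c : a ≤ b -> b ≤ c -> a ≤ c.
Proof. unfold le; intros Hab Hbc. rewrite <- Hab, <- meetA, Hbc. reflexivity. Qed.

Lemma le_antisym a b : a ≤ b -> b ≤ a -> a = b.
Proof. unfold le; intros Hab Hba. rewrite <- Hab, meetC. exact Hba. Qed.

Lemma meet_lb_l a b : a ⊓ b ≤ a.
Proof. unfold le. rewrite meetC, meetA, meetI. reflexivity. Qed.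

Lemma meet_lb_r a b : a ⊓ b ≤ b.
Proof. unfold le. rewrite <- meetA, meetI. reflexivity. Qed.

Lemma meet_glb w a b : w ≤ a -> w ≤ b -> w ≤ a ⊓ b.
Proof. unfold le; intros Ha Hb. rewrite meetA, Ha, Hb. reflexivity. Qed.

Lemma join_ub_l a b : a ≤ a ⊔ b. Proof. apply meetKU. Qed.
Lemma join_ub_r a b : b ≤ a ⊔ b. Proof. rewrite joinC. apply meetKU. Qed.

Lemma join_lub a b c : a ≤ c -> b ≤ c -> a ⊔ b ≤ c.
Proof.
  rewrite !le_joinE; intros Ha Hb. rewrite <- joinA, Hb, Ha. reflexivity.
Qed.

Lemma meet_mono_r a b c : b ≤ c -> a ⊓ b ≤ a ⊓ c.
Proof.
  intro H. apply meet_glb; [apply meet_lb_l | apply (le_trans _ b); [apply meet_lb_r | exact H]].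
Qed.

Lemma add0l x : 𝟎 ⊕ x = x. Proof. rewrite addC. apply add0r. Qed.
Lemma addNl x : ⊖ x ⊕ x = 𝟎. Proof. rewrite addC. apply addNr. Qed.
Lemma addKl x y : ⊖ x ⊕ (x ⊕ y) = y. Proof. rewrite addA, addNl, add0l. reflexivity. Qed.
Lemma addNKl x y : x ⊕ (⊖ x ⊕ y) = y. Proof. rewrite addA, addNr, add0l. reflexivity. Qed.

Lemma opp_uniq x y : x ⊕ y = 𝟎 -> y = ⊖ x.
Proof. intro H. rewrite <- (addKl x y), H. apply add0r. Qed.

Lemma oppK x : ⊖ ⊖ x = x. Proof. symmetry. apply opp_uniq, addNl. Qed.
Lemma opp0 : ⊖ 𝟎 = 𝟎. Proof. symmetry. apply opp_uniq, add0r. Qed.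

Lemma subr_eq0 x y : x ⊕ ⊖ y = 𝟎 -> x = y.
Proof. intro H. rewrite <- (oppK y). apply opp_uniq. rewrite addC. exact H. Qed.

Lemma add_idem_eq0 b : b ⊕ b = b -> b = 𝟎.
Proof. intro H. rewrite <- (addKl b b), H. apply addNl. Qed.

Lemma le_add2l x a b : a ≤ b -> x ⊕ a ≤ x ⊕ b.
Proof. rewrite !le_joinE. intro H. rewrite <- addJ, H. reflexivity. Qed.

Lemma le_add2r x a b : a ≤ b -> a ⊕ x ≤ b ⊕ x.
Proof. intro H. rewrite (addC a), (addC b). apply le_add2l, H. Qed.

Lemma le_add a b c d : a ≤ b -> c ≤ d -> a ⊕ c ≤ b ⊕ d.
Proof. intros Hab Hcd. apply (le_trans _ (b ⊕ c)); [apply le_add2r | apply le_add2l]; assumption. Qed.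

Lemma le_add2l_cancel x a b : x ⊕ a ≤ x ⊕ b -> a ≤ b.
Proof. intro H. rewrite <- (addKl x a), <- (addKl x b). apply le_add2l, H. Qed.

Lemma le_add2r_cancel x a b : a ⊕ x ≤ b ⊕ x -> a ≤ b.
Proof. rewrite (addC a), (addC b). apply le_add2l_cancel. Qed.

Lemma le_add_nonneg_r x c : 𝟎 ≤ c -> x ≤ x ⊕ c.
Proof. intro H. rewrite <- (add0r x) at 1. apply le_add2l, H. Qed.

Lemma le_add_nonneg_l x c : 𝟎 ≤ c -> x ≤ c ⊕ x.
Proof. rewrite addC. apply le_add_nonneg_r. Qed.

Lemma addM x y z : x ⊕ (y ⊓ z) = (x ⊕ y) ⊓ (x ⊕ z).
Proof.
  apply le_antisym.
  - apply meet_glb; apply le_add2l; [apply meet_lb_l | apply meet_lb_r].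
  - set (w := (x ⊕ y) ⊓ (x ⊕ z)). rewrite <- (addNKl x w). apply le_add2l.
    apply meet_glb; [rewrite <- (addKl x y) | rewrite <- (addKl x z)]; apply le_add2l;
      [apply meet_lb_l | apply meet_lb_r].
Qed.

Lemma addMl x y z : (y ⊓ z) ⊕ x = (y ⊕ x) ⊓ (z ⊕ x).
Proof. rewrite addC, addM, (addC x y), (addC x z). reflexivity. Qed.

Lemma le_opp a b : a ≤ b -> ⊖ b ≤ ⊖ a.
Proof.
  intro H. apply (le_add2l_cancel (a ⊕ b)).
  rewrite <- (addA a b), addNr, add0r, (addC a b), <- (addA b a), addNr, add0r. exact H.
Qed.

Lemma le_opp_cancel a b : ⊖ b ≤ ⊖ a -> a ≤ b.
Proof. intro H. rewrite <- (oppK a), <- (oppK b). apply le_opp, H. Qed.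

Lemma oppJ a b : ⊖ (a ⊔ b) = ⊖ a ⊓ ⊖ b.
Proof.
  apply le_antisym.
  - apply meet_glb; apply le_opp; [apply join_ub_l | apply join_ub_r].
  - apply le_opp_cancel. rewrite oppK.
    apply join_lub; apply le_opp_cancel; rewrite oppK; [apply meet_lb_l | apply meet_lb_r].
Qed.

Lemma meet_add_le a b c : 𝟎 ≤ a -> 𝟎 ≤ b -> 𝟎 ≤ c -> a ⊓ (b ⊕ c) ≤ (a ⊓ b) ⊕ (a ⊓ c).
Proof.
  intros Ha Hb Hc. rewrite addMl, !addM.
  repeat apply meet_glb.
  - apply (le_trans _ a); [apply meet_lb_l | apply le_add_nonneg_r, Ha].
  - apply (le_trans _ a); [apply meet_lb_l | apply le_add_nonneg_r, Hc].
  - apply (le_trans _ a); [apply meet_lb_l | apply le_add_nonneg_l, Hb].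
  - apply meet_lb_r.
Qed.

Lemma nsmul_ge0 n b : 𝟎 ≤ b -> 𝟎 ≤ nsmul s n b.
Proof.
  intro H. induction n as [|n IH]; simpl; [apply le_refl|].
  rewrite <- (add0r 𝟎). apply le_add; assumption.
Qed.

Lemma nsmul_le n a b : a ≤ b -> nsmul s n a ≤ nsmul s n b.
Proof. intro H. induction n as [|n IH]; simpl; [apply le_refl | apply le_add; assumption]. Qed.

Lemma meet_nsmul_eq0 a b n : 𝟎 ≤ a -> 𝟎 ≤ b -> a ⊓ b = 𝟎 -> a ⊓ nsmul s n b = 𝟎.
Proof.
  intros Ha Hb Hab. induction n as [|n IH]; simpl; [rewrite meetC; exact Ha|].
  apply le_antisym.
  - apply (le_trans _ ((a ⊓ b) ⊕ (a ⊓ nsmul s n b))).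
    + apply meet_add_le; [| |apply nsmul_ge0]; assumption.
    + rewrite Hab, IH, add0r. apply le_refl.
  - apply meet_glb; [exact Ha|]. rewrite <- (add0r 𝟎). apply le_add; [|apply nsmul_ge0]; assumption.
Qed.

Lemma pos_meet_neg x : (x ⊔ 𝟎) ⊓ (⊖ x ⊔ 𝟎) = 𝟎.
Proof.
  assert (Hpos : x ⊕ (⊖ x ⊔ 𝟎) = x ⊔ 𝟎) by (rewrite addJ, addNr, add0r; apply joinC).
  assert (Hneg : x ⊓ 𝟎 = ⊖ (⊖ x ⊔ 𝟎)) by (rewrite oppJ, oppK, opp0; reflexivity).
  rewrite <- Hpos, (addC x). rewrite <- (add0r (⊖ x ⊔ 𝟎)) at 2.
  rewrite <- addM, Hneg. apply addNr.
Qed.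

Lemma absv_id a : 𝟎 ≤ a -> absv s a = a.
Proof.
  intro H. unfold absv. rewrite joinC. apply le_joinE.
  apply (le_trans _ 𝟎); [rewrite <- opp0; apply le_opp |]; exact H.
Qed.

(* [a /\ 0] is idempotent for addition because [0 <= a + a]. *)
Lemma absv_ge0 x : 𝟎 ≤ absv s x.
Proof.
  unfold absv. set (a := x ⊔ ⊖ x).
  assert (Ha2 : 𝟎 ≤ a ⊕ a).
  { rewrite <- (addNr x). apply le_add; [apply join_ub_l | apply join_ub_r]. }
  assert (Hidem : (a ⊓ 𝟎) ⊕ (a ⊓ 𝟎) = a ⊓ 𝟎).
  { rewrite addM, (addC (a ⊓ 𝟎) a), addM, !add0r, meetC.
    apply meet_glb; [apply (le_trans _ 𝟎); [apply meet_lb_r | exact Ha2] | apply meet_lb_l]. }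
  unfold le. rewrite meetC. exact (add_idem_eq0 _ Hidem).
Qed.

Lemma is_sup_unique f x y : is_sup s f x -> is_sup s f y -> x = y.
Proof. intros [Ubx Lubx] [Uby Luby]. apply le_antisym; auto. Qed.

Lemma is_sup_ext f g x : (forall n, f n = g n) -> is_sup s f x -> is_sup s g x.
Proof. intro H. replace g with f by (apply functional_extensionality; exact H). auto. Qed.

Section SigmaComplete.
Hypothesis Hc : dedekind_sigma_complete s.

(* With [z = sup_k k e], also [-e + z] bounds all [k e], so [e <= 0]. *)
Lemma sigma_complete_archimedean e b : 𝟎 ≤ e -> (forall k, nsmul s k e ≤ b) -> e = 𝟎.
Proof.
  intros He Hb.
  destruct (Hc (fun k => nsmul s k e)) as [z [Ubz Lubz]]; [exists b; exact Hb|].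
  assert (Hz : z ≤ ⊖ e ⊕ z).
  { apply Lubz. intro k. rewrite <- (addKl e (nsmul s k e)). apply le_add2l, (Ubz (S k)). }
  apply le_antisym; [|exact He].
  apply (le_add2r_cancel z). rewrite add0l. rewrite <- (addNKl e z) at 2. apply le_add2l, Hz.
Qed.

Hypothesis Hw : weak_unit s 𝟏.

(* For [m = sup_n (a /\ n1)] and [d = a - m], induction gives
   [k (d /\ 1) <= a /\ k1 <= a]; so [d /\ 1 = 0] and the weak unit forces [d = 0]. *)
Lemma is_sup_meet_nsmul_one a : 𝟎 ≤ a -> is_sup s (fun n => a ⊓ nsmul s (S n) 𝟏) a.
Proof.
  intro Ha. destruct Hw as [H1 Hweak].
  destruct (Hc (fun n => a ⊓ nsmul s (S n) 𝟏)) as [m Hm].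
  { exists a. intro n. apply meet_lb_l. }
  assert (Hma : m ≤ a) by (apply (proj2 Hm); intro n; apply meet_lb_l).
  set (d := a ⊕ ⊖ m).
  assert (Ha_dm : a = d ⊕ m) by (unfold d; rewrite <- addA, addNl, add0r; reflexivity).
  assert (Hd : 𝟎 ≤ d) by (unfold d; rewrite <- (addNr m); apply le_add2r, Hma).
  assert (Hk : forall k, a ⊓ nsmul s k 𝟏 ≤ m).
  { intros [|k]; [|exact (proj1 Hm k)].
    apply (le_trans _ (a ⊓ nsmul s 1 𝟏)); [|exact (proj1 Hm 0)].
    apply meet_mono_r. simpl. rewrite add0r. exact H1. }
  assert (Hmult : forall k, nsmul s k (d ⊓ 𝟏) ≤ a ⊓ nsmul s k 𝟏).
  { induction k as [|k IH]; simpl; [apply meet_glb; [exact Ha | apply le_refl]|].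
    apply meet_glb.
    - rewrite Ha_dm. apply le_add; [apply meet_lb_l | exact (le_trans _ _ _ IH (Hk k))].
    - apply le_add; [apply meet_lb_r | exact (le_trans _ _ _ IH (meet_lb_r _ _))]. }
  assert (He0 : d ⊓ 𝟏 = 𝟎).
  { apply (sigma_complete_archimedean _ a); [apply meet_glb; assumption|].
    intro k. exact (le_trans _ _ _ (Hmult k) (meet_lb_l _ _)). }
  assert (Hm_a : m = a) by (symmetry; apply subr_eq0, Hweak, He0).
  rewrite Hm_a in Hm. exact Hm.
Qed.

End SigmaComplete.
End LGroup.

Section VAlgebra.
Context {T : Type} (o : V_ops T) (Ho : is_V o).

Local Notation s := (base o).
Local Notation "x ⊓ y" := (meet s x y) (at level 40, left associativity).
Local Notation "x ≤ y" := (le s x y) (at level 70).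
Local Notation "𝟎" := (zero s).
Local Notation "𝟏" := (one s).

Let Hs : lgroup_axioms s := proj1 Ho.

Lemma bigv_is_sup g f : is_sup s (fun n => f n ⊓ g) (bigv o g f).
Proof.
  pose proof Ho as (_ & A1 & A2 & A3 & _). split.
  - intro n. revert f. induction n as [|n IH]; intro f; rewrite A2.
    + apply (join_ub_l Hs).
    + exact (le_trans Hs _ _ _ (IH (fun n => f (S n))) (join_ub_r Hs _ _)).
  - intros u Hu. rewrite A1.
    replace (fun n => f n ⊓ g) with (fun n => (f n ⊓ g) ⊓ u)
      by (apply functional_extensionality; intro n; apply Hu).
    apply A3.
Qed.

Lemma bigv_sup_eq f x : is_sup s f x -> bigv o x f = x.
Proof.
  intro Hx. apply (is_sup_unique Hs (fun n => f n ⊓ x)); [apply bigv_is_sup|].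
  apply (is_sup_ext f); [intro n; symmetry; apply (proj1 Hx) | exact Hx].
Qed.

Lemma V_sigma_complete : dedekind_sigma_complete s.
Proof.
  intros f [u Hu]. exists (bigv o u f).
  apply (is_sup_ext (fun n => f n ⊓ u)); [apply Hu | apply bigv_is_sup].
Qed.

Lemma V_eq0_of_meet_nsmul_one a : 𝟎 ≤ a -> (forall n, a ⊓ nsmul s (S n) 𝟏 ≤ 𝟎) -> a = 𝟎.
Proof.
  intros Ha Hn. pose proof Ho as (_ & _ & _ & _ & Hunit).
  pose proof (bigv_is_sup (absv s a) (fun n => meet s (absv s a) (nsmul s (S n) 𝟏))) as Hsup.
  rewrite Hunit, (absv_id Hs _ Ha) in Hsup.
  apply (le_antisym Hs); [apply (proj2 Hsup); intro n; exact (le_trans Hs _ _ _ (meet_lb_l Hs _ _) (Hn n)) | exact Ha].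
Qed.

(* The negative part [p] of [1] is disjoint from its positive part, hence from
   every multiple of [1]; the unit axiom then kills [p]. *)
Lemma V_one_ge0 : 𝟎 ≤ 𝟏.
Proof.
  set (p := join s (opp s 𝟏) 𝟎). set (q := join s 𝟏 𝟎).
  assert (Hp : 𝟎 ≤ p) by apply (join_ub_r Hs).
  assert (Hq : 𝟎 ≤ q) by apply (join_ub_r Hs).
  assert (Hpq : p ⊓ q = 𝟎) by (unfold p, q; rewrite (meetC Hs); apply (pos_meet_neg Hs)).
  assert (Hp0 : p = 𝟎).
  { apply V_eq0_of_meet_nsmul_one; [exact Hp|]. intro n.
    rewrite <- (meet_nsmul_eq0 Hs p q (S n) Hp Hq Hpq).
    apply (meet_mono_r Hs), (nsmul_le Hs), (join_ub_l Hs). }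
  assert (Hneg : 𝟏 ⊓ 𝟎 = opp s p) by (unfold p; rewrite (oppJ Hs), (oppK Hs), (opp0 Hs); reflexivity).
  unfold le. rewrite (meetC Hs), Hneg, Hp0. apply (opp0 Hs).
Qed.

Lemma V_weak_unit : weak_unit s 𝟏.
Proof.
  split; [exact V_one_ge0|]. intros f Hf.
  assert (Hf0 : 𝟎 ≤ f) by (rewrite <- Hf; apply (meet_lb_l Hs)).
  apply V_eq0_of_meet_nsmul_one; [exact Hf0|]. intro n.
  rewrite (meet_nsmul_eq0 Hs f 𝟏 (S n) Hf0 V_one_ge0 Hf). apply (le_refl Hs).
Qed.

Lemma U_ob_sigma_lgu : is_sigma_lgu (U_ob o).
Proof. exact (conj Hs (conj V_sigma_complete V_weak_unit)). Qed.

End VAlgebra.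

Section FreeSup.
Context {T : Type} (s : lgu_ops T) (Hs : is_sigma_lgu s).

Lemma F_bigv_is_sup g f : is_sup s (fun n => meet s (f n) g) (bigv (F_ob s) g f).
Proof.
  destruct Hs as (HL & Hc & _). simpl. apply epsilon_spec, Hc.
  exists g. intro n. apply (meet_lb_r HL).
Qed.

Lemma F_ob_V : is_V (F_ob s).
Proof.
  destruct Hs as (HL & Hc & Hw).
  assert (Hsup_eq : forall g f x, is_sup s (fun n => meet s (f n) g) x -> bigv (F_ob s) g f = x)
    by (intros g f x; apply (is_sup_unique HL), F_bigv_is_sup).
  split; [exact HL|]. split; [|split; [|split]].
  - intros g f. symmetry. apply Hsup_eq.
    apply (is_sup_ext (fun n => meet s (f n) g)); [|apply F_bigv_is_sup].
    intro n. rewrite <- (meetA HL), (meetI HL). reflexivity.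
  - intros g f. apply Hsup_eq.
    destruct (F_bigv_is_sup g (fun n => f (S n))) as [Ub Lub]. split.
    + intros [|n]; [apply (join_ub_l HL) | exact (le_trans HL _ _ _ (Ub n) (join_ub_r HL _ _))].
    + intros u Hu. apply (join_lub HL); [exact (Hu 0) | apply Lub; intro n; exact (Hu (S n))].
  - intros g h f. apply (proj2 (F_bigv_is_sup g _)). intro n.
    exact (le_trans HL _ _ _ (meet_lb_l HL _ _) (meet_lb_r HL _ _)).
  - intro f. apply Hsup_eq.
    apply (is_sup_ext (fun n => meet s (absv s f) (nsmul s (S n) (one s)))).
    + intro n. symmetry. apply (meet_lb_l HL).
    + apply (is_sup_meet_nsmul_one HL Hc Hw), (absv_ge0 HL).
Qed.

End FreeSup.

Lemma lhom_meet {T1 T2 : Type} (s1 : lgu_ops T1) (s2 : lgu_ops T2) (h : T1 -> T2) :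
  is_lhom s1 s2 h -> forall x y, h (meet s1 x y) = meet s2 (h x) (h y).
Proof. intros (_ & _ & _ & _ & Hmeet). exact Hmeet. Qed.

Lemma U_hom {T1 T2 : Type} (o1 : V_ops T1) (o2 : V_ops T2) (h : T1 -> T2) :
  is_V o1 -> is_V o2 -> hom_V o1 o2 h -> hom_sigma_lgu (U_ob o1) (U_ob o2) h.
Proof.
  intros H1 H2 [Hl [Hone Hbigv]]. unfold U_ob. split; [exact Hl|]. split; [|exact Hone].
  intros f x Hx. rewrite <- (bigv_sup_eq o1 H1 f x Hx), Hbigv.
  apply (is_sup_ext (fun n => meet (base o2) (h (f n)) (h x))); [|apply bigv_is_sup, H2].
  intro n. rewrite <- (lhom_meet _ _ _ Hl), (proj1 Hx n). reflexivity.
Qed.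

Lemma F_hom {T1 T2 : Type} (s1 : lgu_ops T1) (s2 : lgu_ops T2) (h : T1 -> T2) :
  is_sigma_lgu s1 -> is_sigma_lgu s2 -> hom_sigma_lgu s1 s2 h -> hom_V (F_ob s1) (F_ob s2) h.
Proof.
  intros H1 H2 [Hl [Hc Hone]]. split; [exact Hl|]. split; [exact Hone|]. intros g f.
  apply (is_sup_unique (proj1 H2) (fun n => meet s2 (h (f n)) (h g))); [|apply F_bigv_is_sup, H2].
  apply (is_sup_ext (fun n => h (meet s1 (f n) g))); [intro n; apply (lhom_meet _ _ _ Hl) | exact (Hc _ _ (F_bigv_is_sup s1 H1 g f))].
Qed.

Lemma F_ob_U_ob {T : Type} (o : V_ops T) : is_V o -> F_ob (U_ob o) = o.
Proof.
  intro Ho. destruct o as [b bv]. unfold F_ob, U_ob. simpl. f_equal.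
  apply functional_extensionality; intro g. apply functional_extensionality; intro f.
  apply (is_sup_unique (proj1 Ho) (fun n => meet b (f n) g)).
  - exact (F_bigv_is_sup b (U_ob_sigma_lgu _ Ho) g f).
  - exact (bigv_is_sup (VOps b bv) Ho g f).
Qed.

Theorem mainTheorem2 :
  (* U_u is well defined on objects and maps *)
  (forall (T : Type) (o : V_ops T), is_V o -> is_sigma_lgu (U_ob o)) /\
  (forall (T1 T2 : Type) (o1 : V_ops T1) (o2 : V_ops T2) (h : T1 -> T2),
      is_V o1 -> is_V o2 -> hom_V o1 o2 h -> hom_sigma_lgu (U_ob o1) (U_ob o2) h) /\
  (* F_u is well defined on objects and maps *)
  (forall (T : Type) (s : lgu_ops T), is_sigma_lgu s -> is_V (F_ob s)) /\
  (forall (T1 T2 : Type) (s1 : lgu_ops T1) (s2 : lgu_ops T2) (h : T1 -> T2),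
      is_sigma_lgu s1 -> is_sigma_lgu s2 -> hom_sigma_lgu s1 s2 h ->
      hom_V (F_ob s1) (F_ob s2) h) /\
  (* mutually inverse (on maps both are the identity) *)
  (forall (T : Type) (s : lgu_ops T), is_sigma_lgu s -> U_ob (F_ob s) = s) /\
  (forall (T : Type) (o : V_ops T), is_V o -> F_ob (U_ob o) = o).
Proof.
  split; [exact @U_ob_sigma_lgu|].
  split; [exact @U_hom|].
  split; [exact @F_ob_V|].
  split; [exact @F_hom|].
  split; [reflexivity | exact @F_ob_U_ob].
Qed.
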